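(* Let $n>2$ and $q>0$ be integers such that $n$ is even or $q$ is odd. Then for every prime $p>\max\{n,(q-1)n+1\}$, $$ \sum_{k=0}^{p-1}\frac{(q-\frac{p}{n})_k^n}{(1)_k^n}\equiv0\pmod{p^3}. $$
   Context: $(x)_k$ denotes the Pochhammer symbol: $(x)_0=1$ and $(x)_k=x(x+1)\cdots(x+k-1)$ for $k>0$. A congruence between rational numbers modulo $p^m$ means their difference lies in $p^m\mathbb{Z}_{(p)}$, where $\mathbb{Z}_{(p)}$ is the ring of rationals whose denominators are coprime to $p$. *)

From mathcomp Require Import all_boot all_order all_algebra.
Set Implicit Arguments. Unset Strict Implicit. Unset Printing Implicit Defensive.
Import Order.TTheory GRing.Theory Num.Theory.
Local Open Scope ring_scope.

Definition poch (x : rat) (k : nat) : rat := \prod_(i < k) (x + i%:R).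

Definition in_Zp (p : nat) (r : rat) : bool := coprime `|denq r|%N p.

Definition congr_rat (p m : nat) (x y : rat) : Prop :=
  exists r : rat, in_Zp p r /\ x - y = (p ^ m)%:R * r.

(* Write q = r + 1, m = p - q and x = p/n, so that x = 0 mod p.  For m < k < p the
   factor q - x + m = p (1 - 1/n) of (q - x)_k makes the k-th summand vanish mod p^n.
   For k <= m, expanding (j - x)^n to second order in x gives, mod p^3,
     (q - x)_k^n / k!^n = W_k (1 + g H_k),
   with W_k = prod_{i<k} j_i^(n-1) (j_i - p) / k!^n, j_i = q + i, g = C(n,2) x^2 and
   H_k = sum_{i<k} 1/j_i^2.  Now W_k = (-1)^k C(m,k) C(k+r,r)^(n-1), so sum_k W_k is an
   alternating binomial sum of a polynomial in k of degree < m, hence 0.  As g = 0 mod p^2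
   it remains to see that sum_k W_k H_k = 0 mod p, where W_k = C(k+r,r)^n mod p.
   The reflection k -> m - k preserves C(k+r,r)^n mod p (rn is even) and sends H_k to
   sum_{k<j<=m} 1/j^2 mod p.  Adding both forms, twice the sum is
   sum_{k<=m} C(k+r,r)^n (sum_{q<=j<=m} 1/j^2 + sum_{l=1}^r 1/(k+l)^2), the sum over
   k <= m of a polynomial P of degree <= rn <= p - 2 which vanishes mod p for
   m < k < p; and the sum of such a P over a full residue system is 0 mod p. *)

From HB Require Import structures.
From mathcomp Require Import all_boot all_order all_algebra.
From mathcomp Require Import ring zify.
Set Implicit Arguments. Unset Strict Implicit. Unset Printing Implicit Defensive.
Import Order.TTheory GRing.Theory Num.Theory.
Local Open Scope ring_scope.

Lemma in_ZpP p (x : rat) :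
  reflect (exists2 b : nat, coprime b p & x * b%:R \is a Num.int) (in_Zp p x).
Proof.
apply: (iffP idP) => [cop | [b cop /intrP[a xb]]].
  exists `|denq x|%N => //.
  have -> : (`|denq x|%N)%:R = (denq x)%:~R :> rat by rewrite -[in RHS]absz_denq.
  by rewrite -numqE intr_int.
rewrite /in_Zp; apply: coprime_dvdl cop.
have num_b : numq x * b%:Z = a * denq x.
  apply: (@intr_inj rat); rewrite !rmorphM /= numqE -xb pmulrn; ring.
have : (denq x %| numq x * b%:Z)%Z by rewrite num_b dvdz_mull.
by rewrite Gauss_dvdzr // /coprimez gcdzC; apply: coprime_num_den.
Qed.

Fact in_Zp_subring_closed p : subring_closed (in_Zp p).
Proof.
split=> [|x y|x y].
- by apply/in_ZpP; exists 1%N; rewrite ?coprime1n // mulr1.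
- move=> /in_ZpP[a ca xa] /in_ZpP[b cb yb]; apply/in_ZpP; exists (a * b)%N.
    by rewrite coprimeMl ca.
  have -> : (x - y) * (a * b)%:R = x * a%:R * b%:R - y * b%:R * a%:R.
    by rewrite natrM; ring.
  by apply: rpredB; apply: rpredM => //; apply: natr_int.
- move=> /in_ZpP[a ca xa] /in_ZpP[b cb yb]; apply/in_ZpP; exists (a * b)%N.
    by rewrite coprimeMl ca.
  by rewrite natrM mulrACA rpredM.
Qed.
HB.instance Definition _ p :=
  GRing.isSubringClosed.Build rat (in_Zp p) (in_Zp_subring_closed p).

Definition pZp p j : pred rat := fun x => in_Zp p (x / (p ^ j)%:R).

Section PadicIdeal.
Variable p : nat.
Hypothesis p_prime : prime p.

Lemma pZpE j x : (x \in pZp p j) = (x / (p ^ j)%:R \in in_Zp p).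
Proof. by []. Qed.

Fact pZp_zmod_closed j : zmod_closed (pZp p j).
Proof. by split=> [|x y]; rewrite !pZpE ?mul0r ?rpred0 // mulrBl; apply: rpredB. Qed.
HB.instance Definition _ j :=
  GRing.isZmodClosed.Build rat (pZp p j) (pZp_zmod_closed j).

Lemma in_Zp_coprimeV k : coprime k p -> k%:R^-1 \in in_Zp p.
Proof.
move=> cop; apply/in_ZpP; exists k => //.
have [->|k_gt0] := posnP k; first by rewrite mulr0 rpred0.
by rewrite mulVf ?pnatr_eq0 -?lt0n // rpred1.
Qed.

Lemma pexpr_neq0 j : (p ^ j)%:R != 0 :> rat.
Proof. by rewrite pnatr_eq0 -lt0n expn_gt0 prime_gt0. Qed.

Lemma pZp0 : pZp p 0 =i in_Zp p.
Proof. by move=> x; rewrite pZpE expn0 divr1. Qed.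

Lemma pZpMl j a x : a \in in_Zp p -> x \in pZp p j -> a * x \in pZp p j.
Proof. by rewrite !pZpE -mulrA; apply: rpredM. Qed.

Lemma pZpMr j a x : a \in in_Zp p -> x \in pZp p j -> x * a \in pZp p j.
Proof. by rewrite mulrC; apply: pZpMl. Qed.

Lemma pZpM i j x y : x \in pZp p i -> y \in pZp p j -> x * y \in pZp p (i + j).
Proof. by rewrite !pZpE expnD natrM invfM mulrACA; apply: rpredM. Qed.

Lemma pZpX j k x : x \in pZp p j -> x ^+ k \in pZp p (j * k).
Proof.
move=> xj; elim: k => [|k ih]; first by rewrite muln0 pZp0 expr0 rpred1.
by rewrite exprS mulnS pZpM.
Qed.

Lemma pZpW i j : (i <= j)%N -> {subset pZp p j <= pZp p i}.
Proof.
move=> le_ij x; rewrite !pZpE -(subnKC le_ij) expnD natrM invfM mulrA => xj.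
by rewrite -[_ / _](divfK (pexpr_neq0 (j - i))) rpredM // rpred_nat.
Qed.

Lemma pZp_in_Zp j : {subset pZp p j <= in_Zp p}.
Proof. by move=> x /(pZpW (leq0n j)); rewrite pZp0. Qed.

Lemma pZp_dvd a : (p %| a)%N -> a%:R \in pZp p 1.
Proof.
move=> /dvdnP[b ->]; rewrite pZpE natrM expn1 mulfK ?rpred_nat //.
by rewrite pnatr_eq0 -lt0n prime_gt0.
Qed.

Lemma in_Zp_natV k : (0 < k < p)%N -> k%:R^-1 \in in_Zp p.
Proof. by case/andP=> k_gt0 lt_kp; rewrite in_Zp_coprimeV // coprime_sym prime_coprime // gtnNdvd. Qed.

Lemma in_Zp_natXV j e : (0 < j < p)%N -> (j%:R ^+ e)^-1 \in in_Zp p.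
Proof. by move=> j_range; rewrite -exprVn rpredX // in_Zp_natV. Qed.

Lemma in_Zp_factV k : (k < p)%N -> k`!%:R^-1 \in in_Zp p.
Proof.
move=> lt_kp; apply: in_Zp_coprimeV; elim: k lt_kp => [|k ih] lt_kp; first exact: coprime1n.
rewrite factS coprimeMl ih ?(ltnW lt_kp) // coprime_sym prime_coprime //.
by rewrite gtnNdvd.
Qed.

Lemma in_Zp_factXV k e : (k < p)%N -> (k`!%:R ^+ e)^-1 \in in_Zp p.
Proof. by move=> lt_kp; rewrite -exprVn rpredX ?in_Zp_factV. Qed.

Lemma pZp_congrM j x x' y y' : x \in in_Zp p -> y' \in in_Zp p ->
  x - x' \in pZp p j -> y - y' \in pZp p j -> x * y - x' * y' \in pZp p j.
Proof.
move=> x_int y'_int dx dy.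
have -> : x * y - x' * y' = x * (y - y') + (x - x') * y' by ring.
by apply: rpredD; [apply: pZpMl | apply: pZpMr].
Qed.

Lemma pZp_congr_prod j I (s : seq I) (F G : I -> rat) :
  (forall i, F i \in in_Zp p) -> (forall i, G i \in in_Zp p) ->
  (forall i, F i - G i \in pZp p j) ->
  \prod_(i <- s) F i - \prod_(i <- s) G i \in pZp p j.
Proof.
move=> F_int G_int dFG; elim: s => [|i s ih]; first by rewrite !big_nil subrr rpred0.
by rewrite !big_cons pZp_congrM // rpred_prod.
Qed.

Lemma pZp_congrX j e x y : x \in in_Zp p -> y \in in_Zp p ->
  x - y \in pZp p j -> x ^+ e - y ^+ e \in pZp p j.
Proof.
move=> x_int y_int dxy; elim: e => [|e ih]; first by rewrite subrr rpred0.
by rewrite !exprS pZp_congrM ?rpredX.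
Qed.

Lemma prod_one_add_pZp j I (s : seq I) (e : I -> rat) :
  (forall i, e i \in pZp p j) ->
  \prod_(i <- s) (1 + e i) - (1 + \sum_(i <- s) e i) \in pZp p (j + j).
Proof.
move=> e_j; elim: s => [|i s ih]; first by rewrite !big_nil addr0 subrr rpred0.
set P := \prod_(i <- s) _ in ih *; set S := \sum_(i <- s) _ in ih *.
have S_j : S \in pZp p j by rewrite rpred_sum.
have P1_j : P - 1 \in pZp p j.
  by rewrite -(subrK S (P - 1)) rpredD // -addrA -opprD (pZpW (leq_addr j j)).
rewrite !big_cons -/P -/S.
have -> : (1 + e i) * P - (1 + (e i + S)) = (P - (1 + S)) + e i * (P - 1) by ring.
by rewrite rpredD // pZpM.
Qed.

Lemma exprB_pZp3 n a y : a \in in_Zp p -> y \in pZp p 1 ->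
  (a - y) ^+ n.+2 - (a ^+ n.+2 - n.+2%:R * y * a ^+ n.+1 + 'C(n.+2, 2)%:R * y ^+ 2 * a ^+ n)
    \in pZp p 3.
Proof.
move=> a_int y_1; rewrite exprDn !big_ord_recl !lift0 /= !subSS !subn0.
rewrite bin0 bin1 expr0 expr1 mulr1 mulr1n.
have cancel (rest : rat) :
  a ^+ n.+2 + ((a ^+ n.+1 * - y) *+ n.+2 + ((a ^+ n * (- y) ^+ 2) *+ 'C(n.+2, 2) + rest))
  - (a ^+ n.+2 - n.+2%:R * y * a ^+ n.+1 + 'C(n.+2, 2)%:R * y ^+ 2 * a ^+ n) = rest.
  by ring.
rewrite cancel rpred_sum // => i _; rewrite rpredMn // pZpMl ?rpredX //.
by rewrite /bump /= !add1n (pZpW (_ : 3 <= 1 * i.+3)%N) // pZpX // rpredN.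
Qed.

Lemma congr_rat0 j x : x \in pZp p j -> congr_rat p j x 0.
Proof. by move=> xj; exists (x / (p ^ j)%:R); split; rewrite // subr0 mulrC divfK ?pexpr_neq0. Qed.

End PadicIdeal.

Section AlternatingBinomialSum.
Variable R : idomainType.

Lemma alt_binomial_sumS (f : nat -> R) m :
  \sum_(k < m.+2) (-1) ^+ k * 'C(m.+1, k)%:R * f k =
  \sum_(k < m.+1) (-1) ^+ k * 'C(m, k)%:R * (f k - f k.+1).
Proof.
under eq_bigr => k _.
  rewrite (_ : 'C(m.+1, k) = 'C(m, k) + (if k : nat is k'.+1 then 'C(m, k') else 0))%N;
    last by case: (nat_of_ord k) => [|k']; rewrite ?bin0 ?binS.
  rewrite natrD mulrDr mulrDl; over.
rewrite big_split /= big_ord_recr /= bin_small // mulr0 mul0r addr0.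
rewrite [X in _ + X]big_ord_recl /= mulr0 mul0r add0r -big_split /=.
by apply: eq_bigr => k _; rewrite /bump /= add1n exprS; ring.
Qed.

Lemma size_poly_diff (P : {poly R}) : (size (P - (P \Po ('X + 1)))%R <= (size P).-1)%N.
Proof.
have [->|P_neq0] := eqVneq P 0; first by rewrite comp_poly0 subr0 size_poly0.
have sizeX1 : size ('X + 1 : {poly R}) = 2 by rewrite -polyC1 size_XaddC.
have size_comp := size_comp_poly2 P sizeX1.
have lead_comp : lead_coef (P \Po ('X + 1)) = lead_coef P.
  by rewrite lead_coef_comp ?sizeX1 // -polyC1 lead_coefXaddC expr1n mulr1.
apply/leq_sizeP => j le_j; rewrite coefB.
have [->|ne_j] := eqVneq j (size P).-1.
  by move: lead_comp; rewrite /lead_coef size_comp => ->; rewrite subrr.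
by rewrite !nth_default ?size_comp ?subrr //; move: le_j ne_j; case: (size P) => //= s; lia.
Qed.

Lemma alt_binomial_sum_poly (P : {poly R}) m : (size P <= m)%N ->
  \sum_(k < m.+1) (-1) ^+ k * 'C(m, k)%:R * P.[k%:R] = 0.
Proof.
elim: m P => [|m ih] P size_P.
  move: size_P; rewrite leqn0 size_poly_eq0 => /eqP ->.
  by rewrite big_ord1 horner0 mulr0.
rewrite (alt_binomial_sumS (fun k => P.[k%:R])) -[RHS](ih (P - (P \Po ('X + 1)))).
  by apply: eq_bigr => k _; rewrite hornerD hornerN horner_comp hornerD hornerX hornerC -natr1.
by apply: leq_trans (size_poly_diff P) _; rewrite -ltnS; case: (size P) size_P.
Qed.

End AlternatingBinomialSum.

Section PolynomialSums.
Variable p : nat.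
Hypothesis p_prime : prime p.

Lemma alt_binomial_pred_prime k : (k < p)%N ->
  1 - (-1) ^+ k * 'C(p.-1, k)%:R \in pZp p 1.
Proof.
elim: k => [|k ih] lt_kp; first by rewrite bin0 mulr1 subrr rpred0.
have -> : 1 - (-1) ^+ k.+1 * 'C(p.-1, k.+1)%:R =
          1 - (-1) ^+ k * 'C(p.-1, k)%:R + (-1) ^+ k * 'C(p, k.+1)%:R :> rat.
  by rewrite -{3}(prednK (prime_gt0 p_prime)) binS natrD exprS; ring.
rewrite rpredD ?ih 1?ltnW //; apply: pZpMl; first by rewrite rpredX ?rpredN1.
exact/pZp_dvd/prime_dvd_bin.
Qed.

Lemma sum_poly_pZp (P : {poly rat}) : (size P <= p.-1)%N ->
  (forall k, (k < p)%N -> P.[k%:R] \in in_Zp p) ->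
  \sum_(k < p) P.[k%:R] \in pZp p 1.
Proof.
(* (-1)^k C(p-1, k) = 1 mod p turns the vanishing alternating sum into this one. *)
move=> size_P P_int; have p_gt0 := prime_gt0 p_prime.
have alt_sum := alt_binomial_sum_poly size_P; rewrite prednK // in alt_sum.
rewrite -[X in X \in _]subr0 -[X in _ - X]alt_sum -sumrB rpred_sum // => k _.
rewrite -{1}[P.[_]]mul1r -mulrBl pZpMr ?P_int //.
by apply: alt_binomial_pred_prime.
Qed.

Lemma sum_poly_prefix_pZp (P : {poly rat}) m : (m < p)%N -> (size P <= p.-1)%N ->
  (forall k, (k < p)%N -> P.[k%:R] \in in_Zp p) ->
  (forall k, (m < k < p)%N -> P.[k%:R] \in pZp p 1) ->
  \sum_(k < m.+1) P.[k%:R] \in pZp p 1.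
Proof.
move=> lt_mp size_P P_int P_tail.
have tail : \sum_(m.+1 <= k < p) P.[k%:R] \in pZp p 1.
  by rewrite big_nat_cond rpred_sum // => k /andP[/andP[lt_mk lt_kp] _]; rewrite P_tail ?lt_mk.
have := rpredB (sum_poly_pZp size_P P_int) tail.
rewrite -!(big_mkord xpredT (fun k => P.[k%:R])).
by rewrite (big_cat_nat (n := m.+1)) //= addrK.
Qed.

End PolynomialSums.

Lemma fact_neq0 k : k`!%:R != 0 :> rat.
Proof. by rewrite pnatr_eq0 -lt0n fact_gt0. Qed.

Lemma pochS x k : poch x k.+1 = poch x k * (x + k%:R).
Proof. by rewrite /poch big_ord_recr. Qed.

Lemma poch_fact a k : a`!%:R * poch a.+1%:R k = (a + k)`!%:R.
Proof.
elim: k => [|k ih]; first by rewrite /poch big_ord0 mulr1 addn0.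
by rewrite pochS mulrA ih addnS factS natrM mulrC -natrD addSn.
Qed.

Lemma poch1 k : poch 1 k = k`!%:R.
Proof. by rewrite -[LHS]mul1r -(poch_fact 0 k). Qed.

Lemma poch_swap a k : poch a.+1%:R k * a`!%:R = poch k.+1%:R a * k`!%:R.
Proof. by rewrite mulrC poch_fact addnC -poch_fact mulrC. Qed.

Lemma poch_reflect x r : poch (1 - x - r%:R) r = (-1) ^+ r * poch x r.
Proof.
have -> : (-1) ^+ r = \prod_(i < r) (-1 : rat) by rewrite prodr_const card_ord.
rewrite /poch (reindex_inj rev_ord_inj) -big_split.
by apply: eq_bigr => i _; rewrite /= natrB ?ltn_ord // -natr1; ring.
Qed.

Section PochhammerModp.
Variable p : nat.

Lemma poch_in_Zp x k : x \in in_Zp p -> poch x k \in in_Zp p.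
Proof. by move=> x_int; rewrite rpred_prod // => i _; rewrite rpredD ?rpred_nat. Qed.

Lemma poch_pZp j x k i : (i < k)%N -> x \in in_Zp p -> x + i%:R \in pZp p j ->
  poch x k \in pZp p j.
Proof.
move=> lt_ik x_int xi; rewrite /poch (bigD1 (Ordinal lt_ik)) //= pZpMr //.
by rewrite rpred_prod // => l _; rewrite rpredD ?rpred_nat.
Qed.

Lemma poch_congr j x y k : x \in in_Zp p -> y \in in_Zp p -> x - y \in pZp p j ->
  poch x k - poch y k \in pZp p j.
Proof.
move=> x_int y_int dxy; apply: pZp_congr_prod => i; try by rewrite rpredD ?rpred_nat.
by rewrite opprD addrACA subrr addr0.
Qed.

End PochhammerModp.

Definition sq_harm (a b : nat) : rat := \sum_(a <= j < b) (j%:R ^+ 2)^-1.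

(* The junk term 0^-1 = 0 makes sq_harm 0 a prefix sum. *)
Lemma sq_harm_sub a b : (a <= b)%N -> sq_harm a b = sq_harm 0 b - sq_harm 0 a.
Proof.
by move=> le_ab; rewrite [sq_harm 0 b](big_cat_nat (n := a)) //= [X in X - _]addrC addrK.
Qed.

Lemma sq_harm_ord a k : sq_harm a (a + k) = \sum_(i < k) ((a + i)%:R ^+ 2)^-1.
Proof.
rewrite /sq_harm -{1}[a]add0n big_addn addKn big_mkord.
by apply: eq_bigr => i _; rewrite addnC.
Qed.

Section SquareHarmonicModp.
Variable p : nat.
Hypothesis p_prime : prime p.

Lemma sq_harm_in_Zp a b : (0 < a)%N -> (b <= p)%N -> sq_harm a b \in in_Zp p.
Proof.
move=> a_gt0 le_bp; rewrite /sq_harm big_nat_cond rpred_sum // => j /andP[/andP[le_aj lt_jb] _].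
by rewrite in_Zp_natXV //; apply/andP; split; lia.
Qed.

Lemma inv_sq_reflect j : (0 < j < p)%N -> (j%:R ^+ 2)^-1 - ((p - j)%:R ^+ 2)^-1 \in pZp p 1.
Proof.
move=> /andP[j_gt0 lt_jp]; have pj_gt0 : (0 < p - j < p)%N by apply/andP; split; lia.
have [j_neq0 pj_neq0] : j%:R != 0 :> rat /\ (p - j)%:R != 0 :> rat.
  by rewrite !pnatr_eq0 -!lt0n subn_gt0.
have -> : (j%:R ^+ 2)^-1 - ((p - j)%:R ^+ 2)^-1 =
    p%:R * ((p%:R - 2%:R * j%:R) * ((j%:R ^+ 2)^-1 * ((p - j)%:R ^+ 2)^-1)) :> rat.
  move: pj_neq0; rewrite natrB ?(ltnW lt_jp) // => pj_neq0; field.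
  by rewrite j_neq0 pj_neq0.
by rewrite pZpMr ?pZp_dvd // rpredM ?rpredB ?rpredM ?rpred_nat ?in_Zp_natXV ?pj_gt0 ?j_gt0.
Qed.

Lemma sq_harm_reflect a d : (0 < a)%N -> (a + d <= p)%N ->
  sq_harm a (a + d) - sq_harm (p - (a + d)).+1 (p - a).+1 \in pZp p 1.
Proof.
move=> a_gt0; elim: d => [|d ih] le_adp.
  by rewrite /sq_harm addn0 !big_geq // subrr rpred0.
have -> : sq_harm (p - (a + d.+1)).+1 (p - a).+1 =
    sq_harm (p - (a + d)).+1 (p - a).+1 + ((p - (a + d))%:R ^+ 2)^-1.
  have -> : (p - (a + d.+1)).+1 = (p - (a + d))%N by lia.
  by rewrite addrC /sq_harm -big_ltn //; lia.
rewrite /sq_harm addnS big_nat_recr ?leq_addr //= -/(sq_harm a (a + d)).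
rewrite -/(sq_harm (p - (a + d)).+1 (p - a).+1) opprD addrACA rpredD //.
  by apply: ih; lia.
by apply: inv_sq_reflect; apply/andP; split; lia.
Qed.

End SquareHarmonicModp.

Definition poch_poly r : {poly rat} := \prod_(i < r) ('X + (i.+1)%:R%:P).

Lemma horner_poch_poly r x : (poch_poly r).[x] = poch (x + 1) r.
Proof.
by rewrite horner_prod; apply: eq_bigr => i _; rewrite hornerD hornerX hornerC -natr1; ring.
Qed.

Lemma size_prod_XaddC_leq r (P : pred 'I_r) (c : 'I_r -> rat) :
  (size (\prod_(i < r | P i) ('X + (c i)%:P))%R <= r.+1)%N.
Proof.
apply: leq_trans (size_poly_prod_leq _ _) _.
under eq_bigr do rewrite size_XaddC.
rewrite sum_nat_const; have := max_card P; rewrite card_ord; lia.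
Qed.

Lemma size_poch_poly r : (size (poch_poly r) <= r.+1)%N.
Proof. exact: (size_prod_XaddC_leq xpredT). Qed.

Lemma size_prod_XaddC_exp_leq r (P : pred 'I_r) (c : 'I_r -> rat) e :
  (size ((\prod_(i < r | P i) ('X + (c i)%:P)) ^+ e) <= r * e + 1)%N.
Proof.
apply: leq_trans (size_poly_exp_leq _ _) _; rewrite addn1 ltnS leq_mul2r.
by rewrite -subn1 leq_subLR add1n size_prod_XaddC_leq orbT.
Qed.

Definition poch_poly_rem r (l : 'I_r) : {poly rat} :=
  \prod_(i < r | i != l) ('X + (i.+1)%:R%:P).

Lemma poch_poly_remP r (l : 'I_r) :
  poch_poly r = ('X + (l.+1)%:R%:P) * poch_poly_rem l.
Proof. exact: bigD1. Qed.

Section MainCongruence.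
Variables n r p : nat.
Hypothesis p_prime : prime p.
Hypothesis n_gt2 : (2 < n)%N.
Hypothesis n_lt_p : (n < p)%N.
Hypothesis rn_lt_p : (r * n + 1 < p)%N.

Local Notation q := r.+1.
Local Notation m := (p - r.+1)%N.
Local Notation x := (p%:R / n%:R : rat).

Definition summand k := poch (q%:R - x) k ^+ n / poch 1 k ^+ n.
(* j^n - n x j^(n-1), the part of (j - x)^n of order < 2 in x *)
Definition pow_lin (j : nat) : rat := j%:R ^+ n.-1 * (j%:R - p%:R).
Definition lin_term k := \prod_(i < k) pow_lin (q + i) / k`!%:R ^+ n.
Definition quad_coef := 'C(n, 2)%:R * x ^+ 2.

Lemma lt_rp : (r < p)%N.
Proof. by move: rn_lt_p n_gt2; nia. Qed.

Lemma lt_mp : (m < p)%N.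
Proof. by have := prime_gt0 p_prime; lia. Qed.

Lemma n_x : n%:R * x = p%:R.
Proof. by rewrite mulrC divfK // pnatr_eq0 -lt0n (ltn_trans _ n_gt2). Qed.

Lemma x_pZp : x \in pZp p 1.
Proof. by rewrite pZpMr ?pZp_dvd // in_Zp_natV // (ltn_trans _ n_gt2). Qed.

Lemma quad_coef_pZp : quad_coef \in pZp p 2.
Proof. by rewrite pZpMl ?rpred_nat // (pZpX 2 x_pZp). Qed.

Lemma summand_tail k : (m < k < p)%N -> summand k \in pZp p 3.
Proof.
move=> /andP[lt_mk lt_kp]; have x_int := pZp_in_Zp p_prime x_pZp.
rewrite /summand poch1 -exprVn pZpMr ?rpredX ?in_Zp_factV //.
apply: (pZpW p_prime (_ : 3 <= 1 * n)%N); first by rewrite mul1n.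
apply/pZpX/(poch_pZp lt_mk); first by rewrite rpredB ?rpred_nat.
have -> : q%:R - x + m%:R = p%:R * (1 - n%:R^-1).
  by rewrite -addrAC -natrD subnKC ?lt_rp //; ring.
by apply: pZpMr; rewrite ?pZp_dvd // rpredB ?rpred1 // in_Zp_natV // (ltn_trans _ n_gt2).
Qed.

Lemma pow_sub_congr j : (0 < j < p)%N ->
  (j%:R - x) ^+ n - pow_lin j * (1 + quad_coef / j%:R ^+ 2) \in pZp p 3.
Proof.
move=> j_range; have j_neq0 : j%:R != 0 :> rat by rewrite pnatr_eq0 -lt0n; case/andP: j_range.
have [x_1 g_2] := (x_pZp, quad_coef_pZp); rewrite /pow_lin /quad_coef in g_2 *.
move: n_x x_1 g_2; case: n n_gt2 => [|[|[|e]]] // _; set y := _ / _ => nx y_1 g_2.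
have := exprB_pZp3 p_prime e.+1 (rpred_nat _ j) y_1.
set T := _ - _ + _ => expand.
have -> : (j%:R - y) ^+ e.+3 - j%:R ^+ e.+2 * (j%:R - p%:R) *
    (1 + 'C(e.+3, 2)%:R * y ^+ 2 / j%:R ^+ 2) =
    ((j%:R - y) ^+ e.+3 - T) + 'C(e.+3, 2)%:R * y ^+ 2 * p%:R * j%:R ^+ e :> rat.
  (* field cannot handle symbolic exponents, hence the generalizations *)
  rewrite /T -nx; move: ((j%:R - y) ^+ e.+3) => Z.
  by rewrite !exprS; move: (j%:R ^+ e) => Je; field.
apply: rpredD => //; apply: pZpMr; first by rewrite rpredX ?rpred_nat.
by rewrite -[3%N]/(2 + 1)%N; apply: pZpM => //; apply: pZp_dvd.
Qed.

Lemma pow_lin_in_Zp j : pow_lin j \in in_Zp p.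
Proof. by rewrite rpredM ?rpredX ?rpredB ?rpred_nat. Qed.

Lemma summand_congr k : (q + k <= p)%N ->
  summand k - lin_term k * (1 + quad_coef * sq_harm q (q + k)) \in pZp p 3.
Proof.
move=> le_qkp; have j_range (i : 'I_k) : (0 < q + i < p)%N.
  by apply/andP; split; [rewrite addn_gt0 | apply: leq_trans le_qkp; rewrite ltn_add2l].
have e_2 (i : 'I_k) : quad_coef / (q + i)%:R ^+ 2 \in pZp p 2.
  exact: pZpMr (in_Zp_natXV _ _ (j_range i)) quad_coef_pZp.
have prod_congr : \prod_(i < k) ((q + i)%:R - x) ^+ n - \prod_(i < k) pow_lin (q + i) *
    \prod_(i < k) (1 + quad_coef / (q + i)%:R ^+ 2) \in pZp p 3.
  rewrite -big_split; apply: pZp_congr_prod => i; last exact: pow_sub_congr.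
    by rewrite rpredX ?rpredB ?rpred_nat ?(pZp_in_Zp p_prime x_pZp).
  by rewrite rpredM ?pow_lin_in_Zp ?rpredD ?rpred1 ?(pZp_in_Zp p_prime (e_2 i)).
have one_add := prod_one_add_pZp p_prime (index_enum 'I_k) e_2.
have U_int : \prod_(i < k) pow_lin (q + i) \in in_Zp p.
  by rewrite rpred_prod // => i _; apply: pow_lin_in_Zp.
have K_int : (k`!%:R ^+ n)^-1 \in in_Zp p by apply: in_Zp_factXV; lia.
have -> : summand k = \prod_(i < k) ((q + i)%:R - x) ^+ n / k`!%:R ^+ n.
  rewrite /summand poch1 /poch prodrXl; congr (_ ^+ _ / _).
  by apply: eq_bigr => i _; rewrite natrD addrAC.
rewrite /lin_term sq_harm_ord mulr_sumr.
move: prod_congr one_add U_int K_int.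
move: (\prod_(i < k) _ ^+ n) (\prod_(i < k) pow_lin _) (\prod_(i < k) (1 + _)) => A U P.
move: (\sum_(i < k) _) (k`!%:R ^+ n) => S K AUP PS U_int K_int.
have -> : A / K - U / K * (1 + S) = (A - U * P) * K^-1 + U * (P - (1 + S)) * K^-1 by ring.
apply: rpredD; apply: pZpMr => //; apply: pZpMl => //.
exact: pZpW PS.
Qed.

(* bin_r k = 'C(k + r, r) *)
Definition bin_r k := poch k.+1%:R r / r`!%:R.

Lemma poch_q k : poch q%:R k = bin_r k * k`!%:R.
Proof. by rewrite /bin_r mulrAC -poch_swap mulfK ?fact_neq0. Qed.

Lemma bin_r_in_Zp k : bin_r k \in in_Zp p.
Proof. by rewrite rpredM ?poch_in_Zp ?rpred_nat ?in_Zp_factV ?lt_rp. Qed.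

Lemma horner_bin_r_poly k : (r`!%:R^-1 *: poch_poly r).[k%:R] = bin_r k.
Proof. by rewrite hornerZ horner_poch_poly natr1 mulrC. Qed.

Lemma prod_sub_p k : (q + k <= p)%N ->
  \prod_(i < k) ((q + i)%:R - p%:R) = (-1) ^+ k * ('C(m, k) * k`!)%:R :> rat.
Proof.
move=> le_qkp; rewrite bin_ffact ffact_prod natr_prod.
have -> : (-1) ^+ k = \prod_(i < k) (-1 : rat) by rewrite prodr_const card_ord.
rewrite -big_split; apply: eq_bigr => i _ /=.
by rewrite natrB; [rewrite natrB ?natrD; [ring | lia] | have := ltn_ord i; lia].
Qed.

Lemma lin_term_closed k : (q + k <= p)%N ->
  lin_term k = (-1) ^+ k * 'C(m, k)%:R * bin_r k ^+ n.-1.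
Proof.
move=> le_qkp; rewrite /lin_term /pow_lin big_split /= prod_sub_p // prodrXl.
have -> : \prod_(i < k) (q + i)%:R = poch q%:R k :> rat.
  by apply: eq_bigr => i _; rewrite natrD.
rewrite poch_q -[in k`!%:R ^+ n](prednK (ltn_trans _ n_gt2)) // exprS exprMn natrM.
move: (k`!%:R ^+ n.-1) (expf_neq0 n.-1 (fact_neq0 k)) => K K_neq0.
by field; rewrite K_neq0 fact_neq0.
Qed.

Lemma sum_lin_term : \sum_(k < m.+1) lin_term k = 0.
Proof.
set P := (r`!%:R^-1 *: poch_poly r) ^+ n.-1.
have size_P : (size P <= m)%N.
  apply: leq_trans (size_poly_exp_leq _ _) _.
  have size_bin : ((size (r`!%:R^-1 *: poch_poly r)).-1 <= r)%N.
    by rewrite -subn1 leq_subLR add1n (leq_trans (size_scale_leq _ _)) ?size_poch_poly.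
  apply: leq_ltn_trans (leq_mul size_bin (leqnn n.-1)) _.
  have := leq_pmulr r (ltn_trans (isT : 0 < 2)%N n_gt2).
  by rewrite -subn1 mulnBr muln1; move: rn_lt_p; lia.
rewrite -[RHS](alt_binomial_sum_poly size_P); apply: eq_bigr => k _.
rewrite lin_term_closed ?horner_exp ?horner_bin_r_poly //.
by have := ltn_ord k; have := lt_rp; lia.
Qed.

Lemma lin_term_congr k : (q + k <= p)%N -> lin_term k - bin_r k ^+ n \in pZp p 1.
Proof.
move=> le_qkp.
have -> : bin_r k ^+ n = \prod_(i < k) (q + i)%:R ^+ n / k`!%:R ^+ n.
  rewrite prodrXl -expr_div_n -[bin_r k](mulfK (fact_neq0 k)) -poch_q.
  by congr ((_ / _) ^+ _); apply: eq_bigr => i _; rewrite natrD.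
rewrite /lin_term -mulrBl; apply: pZpMr; first by apply: in_Zp_factXV; lia.
apply: pZp_congr_prod => i; rewrite ?pow_lin_in_Zp ?rpredX ?rpred_nat //.
rewrite /pow_lin -[in (q + i)%:R ^+ n](prednK (ltn_trans _ n_gt2)) // exprS.
have -> : (q + i)%:R ^+ n.-1 * ((q + i)%:R - p%:R) - (q + i)%:R * (q + i)%:R ^+ n.-1 =
  p%:R * - (q + i)%:R ^+ n.-1 :> rat by ring.
by rewrite pZpMr ?rpredN ?rpredX ?rpred_nat ?pZp_dvd.
Qed.

Lemma bin_r_reflect k : (k <= m)%N -> bin_r (m - k) - (-1) ^+ r * bin_r k \in pZp p 1.
Proof.
move=> le_km; rewrite /bin_r mulrA -poch_reflect -mulrBl.
apply: pZpMr; first by rewrite in_Zp_factV ?lt_rp.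
apply: poch_congr; first exact: rpred_nat.
  by rewrite !rpredB ?rpred1 ?rpred_nat.
have -> : (m - k).+1%:R - (1 - k.+1%:R - r%:R) = p%:R :> rat.
  by rewrite -natr1 natrB // natrB ?lt_rp // -!natr1; ring.
exact: pZp_dvd.
Qed.

Hypothesis rn_even : ~~ odd (r * n).

Lemma bin_r_pow_reflect k : (k <= m)%N -> bin_r (m - k) ^+ n - bin_r k ^+ n \in pZp p 1.
Proof.
move=> le_km; have -> : bin_r k ^+ n = ((-1) ^+ r * bin_r k) ^+ n.
  by rewrite [RHS]exprMn -exprM -signr_odd (negbTE rn_even) mul1r.
apply: pZp_congrX; [exact: bin_r_in_Zp | | exact: bin_r_reflect].
by rewrite rpredM ?rpredX ?rpredN1 ?bin_r_in_Zp.
Qed.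

Definition sym_cofactor : {poly rat} :=
  sq_harm q m.+1 *: poch_poly r ^+ 2 + \sum_(l < r) poch_poly_rem l ^+ 2.

Definition sym_poly : {poly rat} :=
  (r`!%:R ^+ n)^-1 *: (poch_poly r ^+ (n - 2) * sym_cofactor).

Lemma horner_sym_poly k :
  sym_poly.[k%:R] = bin_r k ^+ n * (sq_harm q m.+1 + sq_harm k.+1 (k + q)).
Proof.
rewrite /sym_poly /sym_cofactor hornerZ hornerM hornerD hornerZ horner_sum.
rewrite !horner_exp horner_poch_poly natr1.
rewrite -addSnnS sq_harm_ord /bin_r expr_div_n; set P := poch k.+1%:R r.
have D_eq (l : 'I_r) : (poch_poly_rem l ^+ 2).[k%:R] = P ^+ 2 / (k.+1 + l)%:R ^+ 2.
  have kl_neq0 : (k.+1 + l)%:R != 0 :> rat by rewrite pnatr_eq0.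
  have -> : P = (k.+1 + l)%:R * (poch_poly_rem l).[k%:R].
    rewrite /P -natr1 -horner_poch_poly (poch_poly_remP l) hornerM hornerD hornerX hornerC.
    by rewrite -natrD -addSnnS.
  by rewrite horner_exp exprMn mulrC mulKf ?expf_neq0.
under eq_bigr do rewrite D_eq.
rewrite -mulr_sumr -[in P ^+ n](subnK (ltnW n_gt2)) exprD.
by move: (P ^+ (n - 2)) => P2; ring.
Qed.

Lemma sym_cofactor_in_Zp k : sym_cofactor.[k%:R] \in in_Zp p.
Proof.
rewrite hornerD hornerZ horner_sum; apply: rpredD; first apply: rpredM.
- exact: sq_harm_in_Zp lt_mp.
- by rewrite horner_exp horner_poch_poly rpredX ?poch_in_Zp ?rpredD ?rpred1 ?rpred_nat.
rewrite rpred_sum // => l _; rewrite horner_exp rpredX // horner_prod rpred_prod // => i _.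
by rewrite hornerD hornerX hornerC rpredD ?rpred_nat.
Qed.

Lemma sym_poly_in_Zp k : sym_poly.[k%:R] \in in_Zp p.
Proof.
rewrite hornerZ hornerM horner_exp horner_poch_poly rpredM ?in_Zp_factXV ?lt_rp //.
by rewrite rpredM ?sym_cofactor_in_Zp ?rpredX ?poch_in_Zp ?rpredD ?rpred1 ?rpred_nat.
Qed.

Lemma sym_poly_tail k : (m < k < p)%N -> sym_poly.[k%:R] \in pZp p 1.
Proof.
move=> /andP[lt_mk lt_kp]; rewrite hornerZ hornerM horner_exp horner_poch_poly natr1.
apply: pZpMl; first by rewrite in_Zp_factXV ?lt_rp.
apply: pZpMr; first exact: sym_cofactor_in_Zp.
apply: (pZpW p_prime (_ : 1 <= 1 * (n - 2))%N); first by rewrite mul1n subn_gt0.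
apply/pZpX/(poch_pZp (i := p - k.+1)); first by lia.
  exact: rpred_nat.
by rewrite -natrD subnKC //; apply: pZp_dvd.
Qed.

Lemma size_sym_poly : (size sym_poly <= p.-1)%N.
Proof.
apply: leq_trans (size_scale_leq _ _) _; apply: leq_trans (size_polyMleq _ _) _.
have size_rest : (size sym_cofactor <= r * 2 + 1)%N.
  apply: leq_trans (size_polyD _ _) _; rewrite geq_max.
  rewrite (leq_trans (size_scale_leq _ _)) ?(size_prod_XaddC_exp_leq xpredT) //=.
  apply: leq_trans (size_sum _ _ _) _; apply/bigmax_leqP => l _.
  exact: size_prod_XaddC_exp_leq.
have := size_prod_XaddC_exp_leq xpredT (fun i : 'I_r => (i.+1)%:R) (n - 2).
have : (r * 2 <= r * n)%N by rewrite leq_mul2l ltnW ?orbT.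
rewrite -/(poch_poly r) mulnBr; move: rn_lt_p size_rest.
by set a := size (poch_poly r ^+ _); set b := size sym_cofactor; lia.
Qed.

Lemma sq_harm_chasles k : (k <= m)%N ->
  sq_harm q (q + k) + sq_harm k.+1 m.+1 = sq_harm q m.+1 + sq_harm k.+1 (k + q).
Proof.
move=> le_km; have le_qm : (q <= m.+1)%N by move: rn_lt_p n_gt2; nia.
have le_kq : (k.+1 <= k + q)%N by rewrite addnS ltnS leq_addr.
rewrite (sq_harm_sub (leq_addr k q)) (sq_harm_sub (_ : k.+1 <= m.+1)%N) ?ltnS //.
rewrite (sq_harm_sub le_qm) (sq_harm_sub le_kq) [(q + k)%N]addnC.
by rewrite addrACA [in RHS]addrACA [sq_harm 0 m.+1 + _]addrC.
Qed.

Hypothesis p_odd : odd p.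

Lemma sum_bin_r_sq_harm : \sum_(k < m.+1) bin_r k ^+ n * sq_harm q (q + k) \in pZp p 1.
Proof.
set X := \sum_(k < m.+1) _; set Y := \sum_(k < m.+1) bin_r k ^+ n * sq_harm k.+1 m.+1.
(* The reflection k -> m - k turns X into Y mod p. *)
have XY : X - Y \in pZp p 1.
  rewrite /X (reindex_inj rev_ord_inj) -sumrB rpred_sum // => k _ /=.
  have le_km : (k <= m)%N by rewrite -ltnS.
  rewrite subSS; apply: pZp_congrM; rewrite ?rpredX ?bin_r_in_Zp ?bin_r_pow_reflect //.
    exact: sq_harm_in_Zp lt_mp.
  have le_qmk : (q + (m - k) <= p)%N by have := lt_rp; lia.
  have := sq_harm_reflect p_prime (ltn0Sn r) le_qmk.
  by rewrite (_ : p - (q + (m - k)) = k)%N; [ | have := lt_rp; lia].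
have XplusY : X + Y \in pZp p 1.
  rewrite /X /Y -big_split /= (eq_bigr (fun k : 'I_m.+1 => sym_poly.[k%:R])); last first.
    by move=> k _; rewrite horner_sym_poly -mulrDr sq_harm_chasles // -ltnS.
  apply: (sum_poly_prefix_pZp p_prime lt_mp size_sym_poly); last exact: sym_poly_tail.
  by move=> k _; apply: sym_poly_in_Zp.
have -> : X = 2%:R^-1 * ((X + Y) + (X - Y)) by field.
apply: pZpMl; last exact: rpredD.
by rewrite in_Zp_natV //= odd_prime_gt2.
Qed.

Lemma sum_lin_term_sq_harm : \sum_(k < m.+1) lin_term k * sq_harm q (q + k) \in pZp p 1.
Proof.
rewrite -(subrK (\sum_(k < m.+1) bin_r k ^+ n * sq_harm q (q + k)) (\sum_(k < m.+1) _)).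
rewrite -sumrB rpredD ?sum_bin_r_sq_harm // rpred_sum // => k _.
have le_qkp : (q + k <= p)%N by have := ltn_ord k; have := lt_rp; lia.
rewrite -mulrBl; apply: pZpMr; last exact: lin_term_congr.
by apply: sq_harm_in_Zp.
Qed.

Lemma sum_summand_pZp : \sum_(0 <= k < p) summand k \in pZp p 3.
Proof.
rewrite (big_cat_nat (n := m.+1)) //=; last by have := lt_rp; lia.
apply: rpredD; last first.
  rewrite big_nat_cond rpred_sum // => k /andP[/andP[lt_mk lt_kp] _].
  by apply: summand_tail; rewrite lt_mk.
set W := \sum_(k < m.+1) lin_term k * (1 + quad_coef * sq_harm q (q + k)).
rewrite big_mkord -[X in X \in _](subrK W) -sumrB; apply: rpredD.
  rewrite rpred_sum // => k _; apply: summand_congr.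
  by have := ltn_ord k; have := lt_rp; lia.
rewrite /W; under eq_bigr do rewrite mulrDr mulr1 mulrCA.
rewrite big_split /= sum_lin_term add0r -mulr_sumr -[3%N]/(2 + 1)%N.
exact: pZpM quad_coef_pZp sum_lin_term_sq_harm.
Qed.

End MainCongruence.

Theorem theorem1p1 (n q p : nat) :
  (2 < n)%N -> (0 < q)%N -> (~~ odd n || odd q) ->
  prime p -> (maxn n ((q - 1) * n + 1) < p)%N ->
  congr_rat p 3
    (\sum_(0 <= k < p)
        (poch (q%:R - p%:R / n%:R) k) ^+ n / (poch 1 k) ^+ n)
    0.
Proof.
move=> n_gt2 q_gt0 parity p_prime; rewrite gtn_max => /andP[n_lt_p].
case: q q_gt0 parity => // r _ /= parity; rewrite subn1 /= => rn_lt_p.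
have rn_even : ~~ odd (r * n) by rewrite oddM negb_and orbC.
have p_odd : odd p.
  by case: (even_prime p_prime) => [p_eq2 | //]; move: n_lt_p n_gt2; rewrite p_eq2; lia.
exact/congr_rat0/(sum_summand_pZp p_prime n_gt2 n_lt_p rn_lt_p rn_even p_odd).
Qed.
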